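(* Let $k\ge 1$, $a\ge 1$ be integers and $N=2^a$. Then: (i) Every $X\in GL(Nk,\mathbb F_2)$ can be written as $X=PM$, where $P$ is an $Nk\times Nk$ permutation matrix and $M$ is a product of in-block factors and at most $4(N-1)$ transversal layers. (ii) If $X\in GL(Nk,\mathbb F_2)$ is block upper triangular or block lower triangular with respect to the partition of $[Nk]$ into $N$ consecutive blocks of size $k$ (i.e. its $k\times k$ block $X_{ij}$ vanishes for all $i>j$, respectively for all $i<j$), then $X$ itself (with no permutation factor) is a product of in-block factors and at most $2(N-1)$ transversal layers.
   Context: Setting: $N$ codeblocks of a CSS code each encoding $k$ logical qubits. Logical qubit $j\in[k]$ of codeblock $i\in[N]$ is given index $(i-1)k+j$. A logical circuit of CNOT gates on the $Nk$ logical qubits is described by its action on $X$-type logical operators, an invertible matrix in $GL(Nk,\mathbb F_2)$; composition of circuits corresponds to matrix multiplication. An in-block factor is a block-diagonal matrix $\mathrm{diag}(C_1,\dots,C_N)$ with each $C_i\in GL(k,\mathbb F_2)$ (for phantom codes these are realized by relabelling qubits, at zero physical cost). Let $E^{(N)}_{ij}\in\mathbb F_2^{N\times N}$ denote the matrix unit with a single $1$ in position $(i,j)$. A transversal layer is a matrix $I_{Nk}+\sum_{t=1}^{s}E^{(N)}_{i_tj_t}\otimes I_k$, where $(i_1,j_1),\dots,(i_s,j_s)$ are ordered pairs of codeblock indices and the $2s$ indices $i_1,j_1,\dots,i_s,j_s$ are pairwise distinct (a physical depth-one layer of transversal CNOTs between disjoint pairs of codeblocks). *)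

From mathcomp Require Import all_boot all_order all_algebra all_fingroup.
Set Implicit Arguments. Unset Strict Implicit. Unset Printing Implicit Defensive.
Import GRing.Theory.
Local Open Scope ring_scope.

(* Logical qubit j (0-based, j < k) of codeblock i (0-based, i < N)
   has global index i*k + j, i.e. (i-1)k+j in 1-based notation. *)
Lemma qidx_subproof (N k : nat) (i : 'I_N) (j : 'I_k) : (i * k + j < N * k)%N.
Proof.
case: i => i /= Hi; case: j => j /= Hj.
apply: (@leq_trans ((i.+1) * k)); first by rewrite mulSn addnC ltn_add2r.
by rewrite leq_mul2r Hi orbT.
Qed.

Definition qidx (N k : nat) (i : 'I_N) (j : 'I_k) : 'I_(N * k) :=
  Ordinal (qidx_subproof i j).

Definition in_block (N k : nat) (M : 'M['F_2]_(N * k)) : Prop :=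
  exists C : 'I_N -> 'M['F_2]_k,
    (forall i, C i \in unitmx) /\
    forall (i i' : 'I_N) (j j' : 'I_k),
      M (qidx i j) (qidx i' j') = if i == i' then C i j j' else 0.

(* Kronecker product A (x) B, with row/column index of (i,j) equal to i*k+j. *)
Definition kron_entry (N k : nat) (A : 'M['F_2]_N) (B : 'M['F_2]_k)
  (i i' : 'I_N) (j j' : 'I_k) : 'F_2 := A i i' * B j j'.

(* Transversal layer: I + sum_t E_{i_t j_t} (x) I_k with all 2s indices
   i_1, j_1, ..., i_s, j_s pairwise distinct. *)
Definition transversal_layer (N k : nat) (M : 'M['F_2]_(N * k)) : Prop :=
  exists s : seq ('I_N * 'I_N),
    uniq (flatten [seq [:: p.1; p.2] | p <- s]) /\
    forall (i i' : 'I_N) (j j' : 'I_k),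
      M (qidx i j) (qidx i' j') =
        (1%:M : 'M['F_2]_(N * k)) (qidx i j) (qidx i' j') +
        \sum_(p <- s) kron_entry (delta_mx p.1 p.2) (1%:M : 'M['F_2]_k) i i' j j'.

Definition mxprod (n : nat) (l : seq 'M['F_2]_n) : 'M['F_2]_n :=
  foldr (fun A B => A *m B) 1%:M l.

Definition circuit_with_layers (N k L : nat) (M : 'M['F_2]_(N * k)) : Prop :=
  exists l : seq (bool * 'M['F_2]_(N * k)),
    (forall t, t \in l ->
       if t.1 then transversal_layer t.2 else in_block t.2) /\
    (count (fun t => t.1) l <= L)%N /\
    M = mxprod (map snd l).

Definition block_upper (N k : nat) (X : 'M['F_2]_(N * k)) : Prop :=
  forall (i i' : 'I_N) (j j' : 'I_k), (i' < i)%N -> X (qidx i j) (qidx i' j') = 0.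
Definition block_lower (N k : nat) (X : 'M['F_2]_(N * k)) : Prop :=
  forall (i i' : 'I_N) (j j' : 'I_k), (i < i')%N -> X (qidx i j) (qidx i' j') = 0.

(* Part (i) follows from part (ii) through an LUP decomposition X = P L U.
   For a block upper triangular X, let T_m be its diagonal part with respect to
   chunks of 2^m consecutive blocks: T_0 is an in-block factor and T_a = X.
   Moreover T_(m+1) = T_m (1 + K), where the nonzero blocks (u, v) of K have u in
   an even chunk and v in the next one.  Grouping them by v - u mod 2^m writes
   1 + K as a product of 2^m factors whose nonzero blocks form matchings; after
   splitting every block into two summands that are invertible or zero, each
   factor is a product of two conjugates of transversal layers by in-block
   factors.  Level m thus costs 2 * 2^m layers, 2(N - 1) in total, and the block
   lower triangular case follows by transposition. *)

From mathcomp Require Import all_boot all_order all_algebra all_fingroup.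
From mathcomp Require Import zify.
Set Implicit Arguments. Unset Strict Implicit. Unset Printing Implicit Defensive.
Import GRing.Theory.
Local Open Scope ring_scope.

Section BlockIndex.
Variables N k : nat.

Lemma ord_mul_gt0r (r : 'I_(N * k)) : (0 < k)%N.
Proof. by case: r; case: k => [|//]; rewrite muln0. Qed.

Lemma qblock_subproof (r : 'I_(N * k)) : (r %/ k < N)%N.
Proof. by rewrite ltn_divLR ?(ord_mul_gt0r r). Qed.

Lemma qoffset_subproof (r : 'I_(N * k)) : (r %% k < k)%N.
Proof. by rewrite ltn_pmod ?(ord_mul_gt0r r). Qed.

Definition qblock (r : 'I_(N * k)) : 'I_N := Ordinal (qblock_subproof r).
Definition qoffset (r : 'I_(N * k)) : 'I_k := Ordinal (qoffset_subproof r).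

Lemma qblock_qidx i j : qblock (qidx i j) = i.
Proof.
have k_gt0 : (0 < k)%N := leq_ltn_trans (leq0n j) (ltn_ord j).
by apply: val_inj; rewrite /= divnMDl // divn_small ?addn0.
Qed.

Lemma qoffset_qidx i j : qoffset (qidx i j) = j.
Proof. by apply: val_inj; rewrite /= modnMDl modn_small. Qed.

Lemma qidxK r : qidx (qblock r) (qoffset r) = r.
Proof. by apply: val_inj; rewrite /= -divn_eq. Qed.

Lemma eq_qidx r c : (r == c) = (qblock r == qblock c) && (qoffset r == qoffset c).
Proof.
apply/eqP/andP => [-> //|[/eqP eb /eqP eo]].
by rewrite -(qidxK r) -(qidxK c) eb eo.
Qed.

Lemma qidx_ltn (i i' : 'I_N) (j j' : 'I_k) : (i < i')%N -> (qidx i j < qidx i' j')%N.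
Proof.
move=> lt_ii' /=; apply: (@leq_trans (i.+1 * k)%N).
  by rewrite mulSn addnC ltn_add2r.
by apply: leq_trans (leq_addr _ _); rewrite leq_mul2r lt_ii' orbT.
Qed.

Lemma big_qidx (R : nmodType) (F : 'I_(N * k) -> R) :
  \sum_r F r = \sum_u \sum_j F (qidx u j).
Proof.
rewrite pair_big /= (reindex (fun p : 'I_N * 'I_k => qidx p.1 p.2)) //.
exists (fun r => (qblock r, qoffset r)) => [[u j] _|r _] /=.
  by rewrite qblock_qidx qoffset_qidx.
by rewrite qidxK.
Qed.

End BlockIndex.

Section BlockMatrix.
Variables (R : pzRingType) (N k : nat).
Implicit Types (F G : 'I_N -> 'I_N -> 'M[R]_k) (M : 'M[R]_(N * k)).

Definition blockmx F : 'M[R]_(N * k) :=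
  \matrix_(r, c) F (qblock r) (qblock c) (qoffset r) (qoffset c).
Definition mxblock M (u v : 'I_N) : 'M[R]_k :=
  \matrix_(j, j') M (qidx u j) (qidx v j').
Definition diag_blockmx (d : 'I_N -> 'M[R]_k) : 'M[R]_(N * k) :=
  blockmx (fun u v => if u == v then d u else 0).

Lemma blockmxE F i j i' j' : blockmx F (qidx i j) (qidx i' j') = F i i' j j'.
Proof. by rewrite mxE !qblock_qidx !qoffset_qidx. Qed.

Lemma blockmxK M : blockmx (mxblock M) = M.
Proof. by apply/matrixP => r c; rewrite !mxE !qidxK. Qed.

Lemma mxblockK F u v : mxblock (blockmx F) u v = F u v.
Proof. by apply/matrixP => j j'; rewrite mxE blockmxE. Qed.

Lemma mxblockD M M' u v : mxblock (M + M') u v = mxblock M u v + mxblock M' u v.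
Proof. by apply/matrixP => j j'; rewrite !mxE. Qed.

Lemma mxblockB M M' u v : mxblock (M - M') u v = mxblock M u v - mxblock M' u v.
Proof. by apply/matrixP => j j'; rewrite !mxE. Qed.

Lemma eq_blockmx F G : (forall u v, F u v = G u v) -> blockmx F = blockmx G.
Proof. by move=> eFG; apply/matrixP => r c; rewrite !mxE eFG. Qed.

Lemma blockmxD F G : blockmx (fun u v => F u v + G u v) = blockmx F + blockmx G.
Proof. by apply/matrixP => r c; rewrite !mxE. Qed.

Lemma blockmx_sum (T : Type) (ts : seq T) (F : T -> 'I_N -> 'I_N -> 'M[R]_k) :
  blockmx (fun u v => \sum_(t <- ts) F t u v) = \sum_(t <- ts) blockmx (F t).
Proof. by apply/matrixP => r c; rewrite mxE !summxE; apply: eq_bigr => t _; rewrite !mxE. Qed.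

Lemma blockmx0 : blockmx (fun _ _ => 0) = 0.
Proof. by apply/matrixP => r c; rewrite !mxE. Qed.

Lemma diag_blockmx1 : diag_blockmx (fun _ => 1%:M) = 1%:M.
Proof. by apply/matrixP => r c; rewrite !mxE eq_qidx; case: eqP; rewrite ?mxE. Qed.

Lemma mulmx_blockmx F G :
  blockmx F *m blockmx G = blockmx (fun u w => \sum_v F u v *m G v w).
Proof.
apply/matrixP => r c; rewrite !mxE big_qidx summxE; apply: eq_bigr => v _.
by rewrite !mxE; apply: eq_bigr => j _; rewrite !mxE !qblock_qidx !qoffset_qidx.
Qed.

Lemma mul_diag_blockmx d F :
  diag_blockmx d *m blockmx F = blockmx (fun u v => d u *m F u v).
Proof.
rewrite mulmx_blockmx; apply: eq_blockmx => u w.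
rewrite (bigD1 u) //= eqxx big1 ?addr0 // => v.
by rewrite eq_sym => /negbTE ->; rewrite mul0mx.
Qed.

Lemma mul_blockmx_diag F d :
  blockmx F *m diag_blockmx d = blockmx (fun u v => F u v *m d v).
Proof.
rewrite mulmx_blockmx; apply: eq_blockmx => u w.
by rewrite (bigD1 w) //= eqxx big1 ?addr0 // => v /negbTE ->; rewrite mulmx0.
Qed.

Lemma mxblock_neq0 M u v :
  mxblock M u v != 0 -> exists j j', M (qidx u j) (qidx v j') != 0.
Proof.
move=> nz; case: (pickP (fun p : 'I_k * 'I_k => M (qidx u p.1) (qidx v p.2) != 0)).
  by case=> j j' ?; exists j, j'.
move=> none; case/eqP: nz; apply/matrixP => j j'; rewrite !mxE.
exact/eqP/negbFE/(none (j, j')).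
Qed.

End BlockMatrix.

Lemma mxprod_cat n (l1 l2 : seq 'M['F_2]_n) : mxprod (l1 ++ l2) = mxprod l1 *m mxprod l2.
Proof. by elim: l1 => [|A l IH] /=; rewrite ?mul1mx // IH mulmxA. Qed.

Lemma mxprod_add1 n (T : Type) (ts : seq T) (K : T -> 'M['F_2]_n) :
  (forall t t', K t *m K t' = 0) ->
  mxprod (map (fun t => 1%:M + K t) ts) = 1%:M + \sum_(t <- ts) K t.
Proof.
move=> K_mul0; elim: ts => [|t ts IH] /=; first by rewrite big_nil addr0.
rewrite IH big_cons mulmxDl !mulmxDr !mul1mx mulmx1.
have -> : K t *m \sum_(t' <- ts) K t' = 0 by rewrite mulmx_sumr big1.
by rewrite addr0 [RHS]addrA addrAC.
Qed.

Section Circuits.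
Variables N k : nat.
Local Notation circuit := (@circuit_with_layers N k).
Implicit Types M : 'M['F_2]_(N * k).

Lemma circuit_mul L1 L2 M1 M2 : circuit L1 M1 -> circuit L2 M2 -> circuit (L1 + L2) (M1 *m M2).
Proof.
move=> [l1 [l1P [l1L ->]]] [l2 [l2P [l2L ->]]]; exists (l1 ++ l2); split.
  by move=> t; rewrite mem_cat => /orP[]; [apply: l1P | apply: l2P].
by rewrite count_cat leq_add // map_cat mxprod_cat.
Qed.

Lemma circuit_leq L1 L2 M : (L1 <= L2)%N -> circuit L1 M -> circuit L2 M.
Proof. by move=> le_L [l [lP [lL ->]]]; exists l; do !split => //; apply: leq_trans le_L. Qed.

Lemma circuit1 : circuit 0 1%:M.
Proof. by exists [::]. Qed.

Lemma in_block_circuit M : in_block M -> circuit 0 M.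
Proof. by exists [:: (false, M)]; split; [move=> t; rewrite inE => /eqP -> | rewrite /= mulmx1]. Qed.

Lemma transversal_layer_circuit M : transversal_layer M -> circuit 1 M.
Proof. by exists [:: (true, M)]; split; [move=> t; rewrite inE => /eqP -> | rewrite /= mulmx1]. Qed.

Lemma circuit_mxprod (T : Type) (ts : seq T) (F : T -> 'M['F_2]_(N * k)) L :
  (forall t, circuit L (F t)) -> circuit (L * size ts) (mxprod (map F ts)).
Proof.
move=> FL; elim: ts => [|t ts IH] /=; first by rewrite muln0; apply: circuit1.
by rewrite mulnS; apply: circuit_mul.
Qed.

Lemma in_block_diag (d : 'I_N -> 'M['F_2]_k) :
  (forall u, d u \in unitmx) -> in_block (diag_blockmx d).
Proof. by move=> d_unit; exists d; split => // i i' j j'; rewrite blockmxE; case: eqP; rewrite ?mxE. Qed.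

Lemma in_block_tr M : in_block M -> in_block M^T.
Proof.
case=> C [C_unit MC]; exists (fun i => (C i)^T); split => [i|i i' j j'].
  by rewrite unitmx_tr.
by rewrite mxE MC eq_sym; case: eqP => [->|_]; rewrite ?mxE.
Qed.

Lemma ends_swap (T : eqType) (s : seq (T * T)) :
  perm_eq (flatten [seq [:: q.1; q.2] | q <- map (fun p => (p.2, p.1)) s])
          (flatten [seq [:: p.1; p.2] | p <- s]).
Proof.
elim: s => //= p s IH.
apply: (@perm_cat _ [:: p.2; p.1] [:: p.1; p.2] _ _ _ IH).
by rewrite (perm_catC [:: p.2] [:: p.1]).
Qed.

Lemma transversal_layer_tr M : transversal_layer M -> transversal_layer M^T.
Proof.
case=> s [s_uniq Ms]; exists (map (fun p => (p.2, p.1)) s); split.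
  by rewrite (perm_uniq (ends_swap s)).
move=> i i' j j'; rewrite mxE Ms big_map !mxE eq_sym; congr (_ + _).
by apply: eq_bigr => p _; rewrite /kron_entry !mxE /= andbC [j' == j]eq_sym.
Qed.

Lemma circuit_tr L M : circuit L M -> circuit L M^T.
Proof.
case=> l [lP [lL ->]]; apply: (circuit_leq lL); clear lL.
elim: l lP => [|t l IH] lP /=; first by rewrite trmx1; apply: circuit1.
rewrite trmx_mul addnC; apply: circuit_mul.
  by apply: IH => t' t'l; apply: lP; rewrite inE t'l orbT.
have := lP t (mem_head _ _); case: (t.1) => tP.
  by apply: transversal_layer_circuit; apply: transversal_layer_tr.
by apply: in_block_circuit; apply: in_block_tr.
Qed.

End Circuits.

Definition unit_or_zero (F : fieldType) n (A : 'M[F]_n) := (A \in unitmx) || (A == 0).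

Lemma strictly_lower_add1_unit (F : fieldType) n (R : 'M[F]_n) :
  (forall i j : 'I_n, R i j != 0 -> (j < i)%N) -> 1%:M + R \in unitmx.
Proof.
move=> R_lower; rewrite unitmxE det_trig; last first.
  apply/is_trig_mxP => i j lt_ij; rewrite !mxE.
  have /negbTE -> : i != j by apply: contraTneq lt_ij => ->; rewrite ltnn.
  rewrite add0r.
  by apply/eqP; apply: contraTT lt_ij => /R_lower /ltnW; rewrite leqNgt.
rewrite big1 ?unitr1 // => i _; rewrite !mxE eqxx.
suff -> : R i i = 0 by rewrite addr0.
by apply/eqP; apply: contraFT (ltnn i) => /R_lower.
Qed.

(* For singular Y write Y = W R E with W, E invertible and R the product of the
   cyclic shift i |-> i - 1 and pid_mx (\rank Y), which is strictly lower
   triangular as \rank Y < n; then Y = W (1 + R) E - W E. *)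
Lemma unit_or_zero_split (F : fieldType) n (Y : 'M[F]_n) :
  exists A : 'M[F]_n, unit_or_zero A && unit_or_zero (Y - A).
Proof.
have [Y_unit|Y_sing] := boolP (Y \in unitmx).
  by exists Y; rewrite /unit_or_zero Y_unit subrr eqxx orbT.
have lt_rank : (\rank Y < n)%N.
  by rewrite ltn_neqAle rank_leq_col andbT; apply: contra Y_sing; rewrite -row_full_unit.
pose s : 'S_n := perm (@ord_pred_inj n).
pose R : 'M[F]_n := perm_mx s *m pid_mx (\rank Y).
have R_lower i j : R i j != 0 -> (j < i)%N.
  rewrite /R -row_permE !mxE permE /=.
  case: andP => [[/eqP e_j lt_r] _|]; last by rewrite eqxx.
  move: e_j lt_r; have := ltn_ord i; case: (i : nat) => [|i'] lt_i.
    rewrite add0n modn_small ?ltn_predL // => _ /leq_ltn_trans/(_ lt_rank).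
    by rewrite prednK // ltnn.
  by rewrite addSn /= modnDr (modn_small (ltnW lt_i)); lia.
pose W := col_ebase Y *m perm_mx s^-1.
have W_unit : W \in unitmx by rewrite unitmx_mul col_ebase_unit unitmx_perm.
have eY : Y = W *m R *m row_ebase Y.
  rewrite /W /R -[in LHS](mulmx_ebase Y); congr (_ *m _).
  by rewrite -!mulmxA (mulmxA (perm_mx _)) -perm_mxM mulVg perm_mx1 mul1mx.
clearbody W.
exists (W *m (1%:M + R) *m row_ebase Y); apply/andP; split.
  by rewrite /unit_or_zero !unitmx_mul W_unit strictly_lower_add1_unit ?row_ebase_unit.
have -> : Y - W *m (1%:M + R) *m row_ebase Y = - (W *m row_ebase Y).
  by rewrite {1}eY mulmxDr mulmxDl mulmx1 opprD addrCA subrr addr0.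
rewrite /unit_or_zero -scaleN1r unitmxZ ?unitrN1 //.
by rewrite unitmx_mul W_unit row_ebase_unit.
Qed.

Section Matchings.
Variables N k : nat.
Local Notation circuit := (@circuit_with_layers N k).
Implicit Types (Q : pred ('I_N * 'I_N)) (M : 'M['F_2]_(N * k)).

Definition restrict_blocks Q M : 'M['F_2]_(N * k) :=
  blockmx (fun u v => if Q (u, v) then mxblock M u v else 0).

Definition supported_on Q M := forall u v, ~~ Q (u, v) -> mxblock M u v = 0.

Lemma restrict_blocks_id Q M : supported_on Q M -> restrict_blocks Q M = M.
Proof.
move=> MQ; rewrite -[RHS]blockmxK; apply: eq_blockmx => u v.
by case: ifPn => // /MQ ->.
Qed.

Lemma restrict_blocksD Q M M' :
  restrict_blocks Q (M + M') = restrict_blocks Q M + restrict_blocks Q M'.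
Proof. by rewrite -blockmxD; apply: eq_blockmx => u v; case: ifP; rewrite ?mxblockD ?addr0. Qed.

Lemma restrict_blocks_mul0 Q Q' M M' :
  (forall p q, Q p -> Q' q -> p.2 != q.1) ->
  restrict_blocks Q M *m restrict_blocks Q' M' = 0.
Proof.
move=> disjoint_ends; rewrite mulmx_blockmx -blockmx0.
apply: eq_blockmx => u w; apply: big1 => v _.
case: ifPn => Quv; last by rewrite mul0mx.
case: ifPn => Qvw; last by rewrite mulmx0.
by move: (disjoint_ends _ _ Quv Qvw); rewrite eqxx.
Qed.

Definition matching Q :=
  (forall p q, Q p -> Q q -> (p.1 == q.1) || (p.2 == q.2) -> p = q) /\
  (forall p q, Q p -> Q q -> p.1 != q.2).

Lemma matching_sub Q Q' : (forall p, Q' p -> Q p) -> matching Q -> matching Q'.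
Proof. by move=> sQ [Q_inj Q_ends]; split=> p q /sQ Qp /sQ Qq; [apply: Q_inj | apply: Q_ends]. Qed.

Lemma uniq_matching_ends Q (s : seq ('I_N * 'I_N)) : matching Q -> uniq s -> all Q s ->
  uniq (flatten [seq [:: p.1; p.2] | p <- s]).
Proof.
case=> Q_inj Q_ends; elim: s => //= p s IH /andP[p_s s_uniq] /andP[Qp Qs].
have notin x : (x == p.1) || (x == p.2) -> x \notin flatten [seq [:: q.1; q.2] | q <- s].
  move=> xp; apply/negP => /flattenP [_ /mapP [q qs ->]]; rewrite !inE => xq.
  have Qq := allP Qs q qs.
  have p_neq_q : p != q by apply: contraNneq p_s => ->.
  case/orP: xp => /eqP ex; rewrite ex in xq; case/orP: xq => /eqP e.
  - by move/eqP: p_neq_q; apply; apply: Q_inj; rewrite ?e ?eqxx.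
  - by move: (Q_ends _ _ Qp Qq); rewrite e eqxx.
  - by move: (Q_ends _ _ Qq Qp); rewrite e eqxx.
  - by move/eqP: p_neq_q; apply; apply: Q_inj; rewrite ?e ?eqxx ?orbT.
rewrite inE negb_or (notin p.1) ?eqxx // (notin p.2) ?eqxx ?orbT // IH // !andbT.
exact: Q_ends.
Qed.

Lemma matching_layer Q : matching Q ->
  transversal_layer (1%:M + blockmx (fun u v => if Q (u, v) then (1%:M : 'M['F_2]_k) else 0)).
Proof.
move=> mQ; exists [seq p <- enum {: 'I_N * 'I_N} | Q p]; split.
  by apply: (uniq_matching_ends mQ); [rewrite filter_uniq ?enum_uniq | apply: filter_all].
move=> i i' j j'; rewrite mxE blockmxE; congr (_ + _).
rewrite /kron_entry big_filter big_mkcond (bigD1_seq (i, i')) ?mem_enum ?enum_uniq //=.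
rewrite big1_seq ?addr0 => [|[p1 p2] /andP[ne _]].
  by case: (Q (i, i')); rewrite ?mxE ?eqxx ?mul1r.
case: (Q _) => //; rewrite mxE /=.
case: (i =P p1) => [e1|_]; last by rewrite mul0r.
case: (i' =P p2) => [e2|_]; last by rewrite mul0r.
by move: ne; rewrite e1 e2 eqxx.
Qed.

(* Conjugating the plain layer by the in-block factor that applies Y p on the
   source block p.1 of each matched pair p (and 1 elsewhere) puts Y p on the
   off-diagonal block p, because no source block is also a target block. *)
Lemma matching_unit_circuit Q (Y : 'I_N * 'I_N -> 'M['F_2]_k) :
  matching Q -> (forall p, Q p -> Y p \in unitmx) ->
  circuit 1 (1%:M + blockmx (fun u v => if Q (u, v) then Y (u, v) else 0)).
Proof.
move=> mQ Y_unit; have [Q_inj Q_ends] := mQ.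
pose d u := if [pick p | Q p && (p.1 == u)] is Some p then Y p else 1%:M.
have d_source p : Q p -> d p.1 = Y p.
  move=> Qp; rewrite /d; case: pickP => [q /andP[Qq /eqP e]|none].
    by congr Y; apply: Q_inj; rewrite ?e ?eqxx.
  by move: (none p); rewrite Qp eqxx.
have d_target p : Q p -> d p.2 = 1%:M.
  move=> Qp; rewrite /d; case: pickP => [q /andP[Qq /eqP e]|//].
  by move: (Q_ends _ _ Qq Qp); rewrite e eqxx.
have d_unit u : d u \in unitmx.
  by rewrite /d; case: pickP => [q /andP[Qq _]|_]; [apply: Y_unit | apply: unitmx1].
have -> : 1%:M + blockmx (fun u v => if Q (u, v) then Y (u, v) else 0) =
    diag_blockmx d *m (1%:M + blockmx (fun u v => if Q (u, v) then 1%:M else 0))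
    *m diag_blockmx (fun u => invmx (d u)).
  rewrite mulmxDr mulmx1 mulmxDl !mul_diag_blockmx mul_blockmx_diag.
  rewrite -diag_blockmx1 /diag_blockmx -!blockmxD; apply: eq_blockmx => u v.
  case: (u =P v) => [<-|_].
    have /negbTE -> : ~~ Q (u, u) by apply/negP => Quu; move: (Q_ends _ _ Quu Quu); rewrite eqxx.
    by rewrite !mulmx0 mul0mx !addr0 mulmxV.
  rewrite !mulmx0 !add0r; case Quv: (Q (u, v)); rewrite ?mulmx0 ?mul0mx //.
  by rewrite (d_source (u, v) Quv) (d_target (u, v) Quv) invmx1 !mulmx1.
rewrite -[1%N]/(0 + 1 + 0)%N; apply: circuit_mul; first apply: circuit_mul.
- exact/in_block_circuit/in_block_diag.
- exact/transversal_layer_circuit/matching_layer.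
- by apply/in_block_circuit/in_block_diag => u; rewrite unitmx_inv.
Qed.

Lemma matching_unit_or_zero_circuit Q M : matching Q ->
  (forall u v, Q (u, v) -> unit_or_zero (mxblock M u v)) ->
  circuit 1 (1%:M + restrict_blocks Q M).
Proof.
move=> mQ MQ; pose Q' := [pred p | Q p && (mxblock M p.1 p.2 != 0)].
have -> : restrict_blocks Q M = blockmx (fun u v => if Q' (u, v) then mxblock M u v else 0).
  by apply: eq_blockmx => u v /=; case: ifP => //= _; case: eqP.
apply: (matching_unit_circuit (Y := fun p => mxblock M p.1 p.2)).
  by apply: matching_sub mQ => p /andP[].
case=> u v /andP[Quv nz]; move: (MQ _ _ Quv) nz.
by case/orP => [//|/eqP ->]; rewrite eqxx.
Qed.

(* Splitting each block into two summands that are invertible or zero gives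
   1 + (A + B) = (1 + A) (1 + B), since A B = 0 for matrices supported on a matching. *)
Lemma matching_circuit Q M : matching Q -> circuit 2 (1%:M + restrict_blocks Q M).
Proof.
move=> mQ; pose A u v := xchoose (unit_or_zero_split (mxblock M u v)).
have AP u v : unit_or_zero (A u v) && unit_or_zero (mxblock M u v - A u v).
  exact: (xchooseP (unit_or_zero_split (mxblock M u v))).
have -> : restrict_blocks Q M =
    restrict_blocks Q (blockmx A) + restrict_blocks Q (M - blockmx A).
  by rewrite -restrict_blocksD addrC subrK.
have AB0 : restrict_blocks Q (blockmx A) *m restrict_blocks Q (M - blockmx A) = 0.
  by apply: restrict_blocks_mul0 => p q Qp Qq; rewrite eq_sym; apply: mQ.2.
rewrite (_ : 1%:M + (_ + _) = (1%:M + restrict_blocks Q (blockmx A)) *m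
                               (1%:M + restrict_blocks Q (M - blockmx A))); last first.
  by rewrite mulmxDl !mulmxDr !mul1mx mulmx1 AB0 addr0 addrA addrAC.
rewrite -[2%N]/(1 + 1)%N; apply: circuit_mul; apply: matching_unit_or_zero_circuit => // u v _.
  by rewrite mxblockK; case/andP: (AP u v).
by rewrite mxblockB mxblockK; case/andP: (AP u v).
Qed.

End Matchings.

Section Level.
Variables N k h : nat.
Hypothesis h_gt0 : (0 < h)%N.
Local Notation circuit := (@circuit_with_layers N k).
Implicit Types M : 'M['F_2]_(N * k).

Definition level_pair (p : 'I_N * 'I_N) : bool :=
  ~~ odd (p.1 %/ h) && (p.2 %/ h == (p.1 %/ h).+1)%N.

(* (p.2 - p.1) mod h; the summand h avoids truncated subtraction. *)
Definition level_tag (p : 'I_N * 'I_N) : 'I_h :=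
  Ordinal (ltn_pmod (p.2 %% h + h - p.1 %% h) h_gt0).

Definition level_tag_pair (t : 'I_h) : pred ('I_N * 'I_N) :=
  [pred p | level_pair p && (level_tag p == t)].

Lemma level_tag_pairE t p : level_tag_pair t p = level_pair p && (level_tag p == t).
Proof. by []. Qed.

Lemma level_tagP (p : 'I_N * 'I_N) : (p.1 + level_tag p = p.2 %[mod h])%N.
Proof.
rewrite -modnDml modnDmr; have := ltn_pmod p.1 h_gt0.
by move=> lt_r; rewrite (_ : _ + _ = p.2 %% h + h)%N ?modnDr ?modn_mod //; lia.
Qed.

Lemma level_pair_target_source (p q : 'I_N * 'I_N) : level_pair p -> level_pair q -> p.2 != q.1.
Proof.
case/andP=> p_even /eqP p_next /andP[q_even _]; apply: contraNneq q_even => <-.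
by rewrite p_next /=.
Qed.

Lemma level_tag_matching t : matching (level_tag_pair t).
Proof.
have eq_div_mod (x y : 'I_N) : (x %/ h = y %/ h)%N -> (x %% h = y %% h)%N -> x = y.
  by move=> ed em; apply: val_inj; rewrite /= (divn_eq x h) (divn_eq y h) ed em.
split=> [[u1 v1] [u2 v2] | p q /andP[Qp _] /andP[Qq _]]; last first.
  by rewrite eq_sym; apply: level_pair_target_source.
move=> /andP[/andP[_ /eqP v1_next] /eqP t1] /andP[/andP[_ /eqP v2_next] /eqP t2] /=.
have := level_tagP (u1, v1); have := level_tagP (u2, v2); rewrite t1 t2 /=.
move=> tag2 tag1 /orP[] /eqP e.
  rewrite e in v1_next tag1 *; congr pair; apply: eq_div_mod.
    by rewrite v1_next v2_next.
  by rewrite -tag1 -tag2.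
have : (u1 + t == u2 + t %[mod h])%N by rewrite tag1 tag2 e.
rewrite eqn_modDr => /eqP e_mod; rewrite e; congr pair; apply: eq_div_mod => //.
by apply: succn_inj; rewrite -v1_next -v2_next e.
Qed.

Lemma restrict_blocks_level_sum M :
  restrict_blocks level_pair M = \sum_(t < h) restrict_blocks (level_tag_pair t) M.
Proof.
rewrite -blockmx_sum; apply: eq_blockmx => u v /=.
case: ifPn => [uv_level|/negbTE uv_nlevel].
  rewrite (bigD1 (level_tag (u, v))) // big1 => [|t].
    by rewrite level_tag_pairE uv_level eqxx /= addr0.
  by rewrite level_tag_pairE uv_level eq_sym => /negbTE ->.
by rewrite big1 // => t _; rewrite level_tag_pairE uv_nlevel.
Qed.

Lemma level_circuit M : supported_on level_pair M -> circuit (2 * h) (1%:M + M).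
Proof.
move=> M_level; rewrite -(restrict_blocks_id M_level) restrict_blocks_level_sum.
rewrite -mxprod_add1 => [|t t']; last first.
  by apply: restrict_blocks_mul0 => p q /andP[Qp _] /andP[Qq _]; apply: level_pair_target_source.
apply: (@circuit_leq _ _ (2 * size (index_enum 'I_h))).
  by rewrite -[index_enum _]enumT size_enum_ord.
apply: circuit_mxprod => t.
exact/matching_circuit/level_tag_matching.
Qed.

End Level.

Section GroupedTriangular.
Variables (R : finComUnitRingType) (n : nat) (f : 'I_n -> nat).
Implicit Types X Y : 'M[R]_n.

Definition upper_by X := forall r c, (f c < f r)%N -> X r c = 0.
Definition diag_by X := forall r c, f r != f c -> X r c = 0.
Definition diag_part X : 'M[R]_n := \matrix_(r, c) if f r == f c then X r c else 0.

Lemma upper_by1 : upper_by 1%:M.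
Proof. by move=> r c lt_cr; rewrite mxE; case: eqP => // e; move: lt_cr; rewrite e ltnn. Qed.

Lemma upper_by_mul X Y : upper_by X -> upper_by Y -> upper_by (X *m Y).
Proof.
move=> uX uY r c lt_cr; rewrite mxE big1 // => x _.
have [lt_xr|le_rx] := ltnP (f x) (f r); first by rewrite uX ?mul0r.
by rewrite uY ?mulr0 // (leq_trans lt_cr le_rx).
Qed.

Lemma diag_by1 : diag_by 1%:M.
Proof. by move=> r c ne_rc; rewrite mxE; case: eqP => // e; move: ne_rc; rewrite e eqxx. Qed.

Lemma diag_by_mul X Y : diag_by X -> diag_by Y -> diag_by (X *m Y).
Proof.
move=> dX dY r c ne_rc; rewrite mxE big1 // => x _.
have [e|ne] := eqVneq (f r) (f x); last by rewrite dX ?mul0r.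
by rewrite dY ?mulr0 // -e.
Qed.

Lemma diag_by_diag_part X : diag_by (diag_part X).
Proof. by move=> r c /negbTE ne_rc; rewrite mxE ne_rc. Qed.

(* In the finite group of units, invmx X is a power of X. *)
Lemma invmx_mul_closed (P : 'M[R]_n -> Prop) X :
  P 1%:M -> (forall A B, P A -> P B -> P (A *m B)) -> X \in unitmx -> P X -> P (invmx X).
Proof.
move=> P1 PM X_unit PX; pose g (M : 'M[R]_n) := X *m M.
have g_inj : injective g.
  by move=> A B /(congr1 (mulmx (invmx X))); rewrite !mulmxA mulVmx // !mul1mx.
have P_iter i : P (iter i g 1%:M) by elim: i => //= i IH; apply: PM.
have := iter_order g_inj 1%:M; rewrite -orderSpred /= => X_iter.
suff -> : invmx X = iter (fingraph.order g 1%:M).-1 g 1%:M by apply: P_iter.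
by rewrite -[invmx X]mulmx1 -{1}X_iter mulmxA mulVmx // mul1mx.
Qed.

Lemma upper_by_inv X : X \in unitmx -> upper_by X -> upper_by (invmx X).
Proof. by apply: invmx_mul_closed; [apply: upper_by1 | apply: upper_by_mul]. Qed.

Lemma diag_by_inv X : X \in unitmx -> diag_by X -> diag_by (invmx X).
Proof. by apply: invmx_mul_closed; [apply: diag_by1 | apply: diag_by_mul]. Qed.

Lemma diag_part_mul X Y : upper_by X -> upper_by Y ->
  diag_part (X *m Y) = diag_part X *m diag_part Y.
Proof.
move=> uX uY; apply/matrixP => r c; rewrite !mxE.
have [e_rc|ne_rc] := eqVneq (f r) (f c).
  apply: eq_bigr => x _; rewrite !mxE; have [<-|ne_rx] := eqVneq (f r) (f x).
    by rewrite e_rc eqxx.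
  rewrite mul0r; have [lt_xr|le_rx] := ltnP (f x) (f r); first by rewrite uX ?mul0r.
  by rewrite uY ?mulr0 // -e_rc ltn_neqAle ne_rx.
apply/esym/big1 => x _; rewrite !mxE.
have [e_rx|_] := eqVneq (f r) (f x); last by rewrite mul0r.
by rewrite -e_rx (negbTE ne_rc) mulr0.
Qed.

Lemma diag_part1 : diag_part 1%:M = 1%:M.
Proof. by apply/matrixP => r c; rewrite !mxE; case: eqP => // e; case: eqP => // erc; case: e; rewrite erc. Qed.

Lemma diag_part_unit X : X \in unitmx -> upper_by X -> diag_part X \in unitmx.
Proof.
move=> X_unit uX; have : diag_part X *m diag_part (invmx X) = 1%:M.
  by rewrite -diag_part_mul ?mulmxV ?diag_part1 //; apply: upper_by_inv.
by case/mulmx1_unit.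
Qed.

End GroupedTriangular.

Lemma sum_neq0 (V : nmodType) (I : finType) (F : I -> V) :
  \sum_i F i != 0 -> exists i, F i != 0.
Proof.
move=> nz; apply/existsP; apply: contraR nz; rewrite negb_exists => /forallP F0.
by apply/eqP; apply: big1 => i _; apply/eqP; move: (F0 i); rewrite negbK.
Qed.

Lemma diag_part_refine (R : finComUnitRingType) n (f g : 'I_n -> nat) (X : 'M[R]_n) :
  (forall r c, f r = f c -> g r = g c) -> X \in unitmx -> upper_by f X ->
  exists2 K : 'M[R]_n, diag_part g X = diag_part f X *m (1%:M + K)
    & forall r c, K r c != 0 -> (f r < f c)%N /\ g r = g c.
Proof.
move=> coarser X_unit uX; have D_unit := diag_part_unit X_unit uX.
set D := diag_part f X; set L := diag_part g X - D.
exists (invmx D *m L).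
  by rewrite mulmxDr mulmxA mulmxV // mulmx1 mul1mx /L addrC subrK.
move=> r c; rewrite mxE => /sum_neq0 [x nz].
have dDinv : diag_by f (invmx D) by apply: diag_by_inv => //; apply: diag_by_diag_part.
have e_rx : f r = f x by apply/eqP; apply: contraNT nz => /dDinv ->; rewrite mul0r.
have : L x c != 0 by apply: contraNneq nz => ->; rewrite mulr0.
rewrite /L !mxE e_rx; have [e_xc|ne_xc] := eqVneq (f x) (f c).
  by rewrite e_xc (coarser _ _ e_xc) eqxx subrr eqxx.
have [e_g|] := eqVneq (g x) (g c); last by rewrite subrr eqxx.
rewrite subr0 => X_nz; split; last by rewrite (coarser _ _ e_rx).
by rewrite ltn_neqAle ne_xc leqNgt; apply: contra X_nz => /uX ->.
Qed.

Lemma diag_blockmx_unit (R : finComUnitRingType) N k (d : 'I_N -> 'M[R]_k) :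
  diag_blockmx d \in unitmx -> forall u, d u \in unitmx.
Proof.
move=> D_unit u; set W := invmx (diag_blockmx d).
have W_diag : diag_by (fun r : 'I_(N * k) => val (qblock r)) W.
  apply: diag_by_inv => // r c ne_rc; rewrite !mxE.
  by rewrite (inj_eq val_inj) in ne_rc; rewrite (negbTE ne_rc) mxE.
have W_blocks : W = diag_blockmx (fun u => mxblock W u u).
  rewrite -[LHS]blockmxK; apply: eq_blockmx => u' v; case: eqP => [-> //|ne].
  apply/matrixP => j j'; rewrite !mxE W_diag // !qblock_qidx.
  by apply/eqP => /val_inj.
have : diag_blockmx d *m W = 1%:M by rewrite mulmxV.
rewrite W_blocks -diag_blockmx1 /diag_blockmx mul_diag_blockmx.
by move=> /(congr1 (fun M => mxblock M u u)); rewrite !mxblockK eqxx => /mulmx1_unit [].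
Qed.

Lemma same_half_succ x y : (x < y)%N -> x./2 = y./2 -> ~~ odd x && (y == x.+1).
Proof. by rewrite -!divn2 => lt_xy e; have := modn2 x; case: (odd x) => /= x_mod2; lia. Qed.

Section BlockUpper.
Variables a k : nat.
Local Notation N := (2 ^ a)%N.
Local Notation circuit := (@circuit_with_layers N k).
Variable X : 'M['F_2]_(N * k).
Hypotheses (X_unit : X \in unitmx) (X_upper : block_upper X).

Definition chunk (m : nat) (r : 'I_(N * k)) : nat := (qblock r %/ 2 ^ m)%N.

Lemma chunkS m r : chunk m.+1 r = (chunk m r)./2.
Proof. by rewrite /chunk expnSr divnMA divn2. Qed.

Lemma upper_by_chunk m : upper_by (chunk m) X.
Proof.
move=> r c lt_cr; rewrite -(qidxK r) -(qidxK c); apply: X_upper.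
by move: lt_cr; apply: contraTT; rewrite -!leqNgt => /leq_div2r ->.
Qed.

Lemma diag_part_chunk0 : diag_part (chunk 0) X = diag_blockmx (fun u => mxblock X u u).
Proof.
apply/matrixP => r c; rewrite !mxE /chunk expn0 !divn1 (inj_eq val_inj).
by case: eqP => [e|_]; rewrite ?mxE // -{1}(qidxK r) -{1}(qidxK c) -e.
Qed.

Lemma diag_part_chunk_top : diag_part (chunk a) X = X.
Proof. by apply/matrixP => r c; rewrite mxE /chunk !divn_small ?eqxx. Qed.

Lemma diag_part_chunk_step m : exists2 K,
  supported_on (level_pair (2 ^ m)) K &
  diag_part (chunk m.+1) X = diag_part (chunk m) X *m (1%:M + K).
Proof.
have coarser r c : chunk m r = chunk m c -> chunk m.+1 r = chunk m.+1 c.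
  by rewrite !chunkS => ->.
have [K -> K_support] := diag_part_refine coarser X_unit (upper_by_chunk (m := m)).
exists K => // u v; apply: contraNeq => /mxblock_neq0 [j [j' /K_support]].
rewrite !chunkS /chunk !qblock_qidx; case=> lt_uv.
exact: same_half_succ.
Qed.

Lemma diag_part_chunk_circuit m : circuit (2 * (2 ^ m - 1)) (diag_part (chunk m) X).
Proof.
elim: m => [|m IH].
  rewrite diag_part_chunk0 expn0 subnn muln0; apply/in_block_circuit/in_block_diag.
  apply: (@diag_blockmx_unit _ _ _ (fun u => mxblock X u u)).
  by rewrite -diag_part_chunk0 diag_part_unit //; apply: upper_by_chunk.
have [K K_level ->] := diag_part_chunk_step m.
apply: circuit_leq (circuit_mul IH (level_circuit (expn_gt0 2 m) K_level)).
by rewrite expnS; have := expn_gt0 2 m; lia.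
Qed.

Lemma block_upper_circuit : circuit (2 * (N - 1)) X.
Proof. by rewrite -diag_part_chunk_top; apply: diag_part_chunk_circuit. Qed.

End BlockUpper.

Lemma mx_lup_decomposition (F : fieldType) n (A : 'M[F]_n) : exists s (L U : 'M[F]_n),
  [/\ A = perm_mx s *m (L *m U), forall i j : 'I_n, (i < j)%N -> L i j = 0
    & forall i j : 'I_n, (j < i)%N -> U i j = 0].
Proof.
case: n A => [|n] A; first by exists 1%g, 1%:M, 1%:M; split=> [|[]|[]] //; apply/matrixP => [[]].
have := cormen_lup_correct A; have := cormen_lup_perm A.
have := cormen_lup_lower A; have := cormen_lup_upper A.
case: (cormen_lup A) => [[P L] U] /= U_upper L_lower /is_perm_mxP [s ->].
move=> PA; exists s^-1%g, L, U; split=> //.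
  have PA' : perm_mx s *m A = L *m U by [].
  by rewrite -PA' mulmxA -perm_mxM mulVg perm_mx1 mul1mx.
move=> i j lt_ij; rewrite L_lower; last exact: ltnW.
by have /negbTE -> : i != j by apply: contraTneq lt_ij => ->; rewrite ltnn.
Qed.

Unset Implicit Arguments.

Theorem theorem1 (k a : nat) (hk : (1 <= k)%N) (ha : (1 <= a)%N) :
  let N := (2 ^ a)%N in
  (forall X : 'M['F_2]_(N * k), X \in unitmx ->
     exists (s : 'S_(N * k)) (M : 'M['F_2]_(N * k)),
       @circuit_with_layers N k (4 * (N - 1)) M /\ X = perm_mx s *m M) /\
  (forall X : 'M['F_2]_(N * k), X \in unitmx ->
     block_upper X \/ block_lower X ->
     @circuit_with_layers N k (2 * (N - 1)) X).
Proof.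
move=> N; have triangular (X : 'M['F_2]_(N * k)) : X \in unitmx ->
    block_upper X \/ block_lower X -> @circuit_with_layers N k (2 * (N - 1)) X.
  move=> X_unit [X_upper|X_lower]; first exact: block_upper_circuit.
  rewrite -[X]trmxK; apply/circuit_tr/block_upper_circuit; first by rewrite unitmx_tr.
  by move=> i i' j j' lt_i'i; rewrite mxE; apply: X_lower.
split=> // X X_unit; have [s [L [U [eX L_lower U_upper]]]] := mx_lup_decomposition X.
exists s, (L *m U); split=> //.
move: X_unit; rewrite eX !unitmx_mul unitmx_perm /= => /andP[L_unit U_unit].
rewrite (_ : 4 * _ = 2 * (N - 1) + 2 * (N - 1))%N; last by rewrite -mulnDl.
apply: circuit_mul; apply: triangular => //; [right|left] => i i' j j' lt_i.
- by apply: L_lower; apply: qidx_ltn.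
- by apply: U_upper; apply: qidx_ltn.
Qed.
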